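(* Let $G$ be a finite abelian group and consider any $(k,l)$ fractional network code over $G$ that is a solution of the sum-network $\mathcal{S}_3'$. Then the map $(X_1,X_2,X_3)\mapsto$ (the pair of vectors carried on the edges $(u_1,v_1)$ and $(u_2,v_2)$) is injective on $G^k\times G^k\times G^k$; equivalently, terminal $t_3$ can recover each of $X_1,X_2,X_3$ individually. Consequently $|G|^{2l}\ge |G|^{3k}$.
   Context: The sum-network $\mathcal{S}_3'$ has sources $s_1,s_2,s_3$, terminals $t_1,t_2,t_3$, intermediate nodes $u_1,v_1,u_2,v_2,u_3$, and edges $(s_1,u_1),(s_3,u_1),(u_1,v_1),(v_1,t_1),(v_1,t_3),(s_2,u_2),(s_3,u_2),(u_2,v_2),(v_2,t_2),(v_2,t_3),(s_1,t_2),(s_1,t_1),(s_2,u_3),(s_1,u_3),(u_3,t_1)$. A $(k,l)$ fractional network code over $G$: each source $s_i$ holds $X_i\in G^k$ and sends on each outgoing edge a function $G^k\to G^l$ of $X_i$; each edge whose tail $v$ is not a source carries a function $G^{l|In(v)|}\to G^l$ of the vectors on the incoming edges of $v$; each terminal applies a decoding function $G^{l|In(t)|}\to G^k$. It is a solution if every terminal outputs $X_1+X_2+X_3$ (componentwise sum in $G^k$) for all messages. *)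

From HB Require Import structures.
From mathcomp Require Import all_boot all_order all_algebra.
Set Implicit Arguments. Unset Strict Implicit. Unset Printing Implicit Defensive.
Import GRing.Theory.
Local Open Scope ring_scope.

(* A function G^{l*m} -> G^l of the m incoming edge vectors of a node is
   represented in curried form, with one 'rV[G]_l argument per incoming edge. *)
Record S3code (G : finZmodType) (k l : nat) := S3Code {
  f_s1u1 : 'rV[G]_k -> 'rV[G]_l;
  f_s1t2 : 'rV[G]_k -> 'rV[G]_l;
  f_s1t1 : 'rV[G]_k -> 'rV[G]_l;
  f_s1u3 : 'rV[G]_k -> 'rV[G]_l;
  f_s2u2 : 'rV[G]_k -> 'rV[G]_l;
  f_s2u3 : 'rV[G]_k -> 'rV[G]_l;
  f_s3u1 : 'rV[G]_k -> 'rV[G]_l;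
  f_s3u2 : 'rV[G]_k -> 'rV[G]_l;
  f_u1v1 : 'rV[G]_l -> 'rV[G]_l -> 'rV[G]_l;
  f_v1t1 : 'rV[G]_l -> 'rV[G]_l;
  f_v1t3 : 'rV[G]_l -> 'rV[G]_l;
  f_u2v2 : 'rV[G]_l -> 'rV[G]_l -> 'rV[G]_l;
  f_v2t2 : 'rV[G]_l -> 'rV[G]_l;
  f_v2t3 : 'rV[G]_l -> 'rV[G]_l;
  f_u3t1 : 'rV[G]_l -> 'rV[G]_l -> 'rV[G]_l;
  (* decoders: In(t1) = {(v1,t1),(s1,t1),(u3,t1)},
     In(t2) = {(v2,t2),(s1,t2)}, In(t3) = {(v1,t3),(v2,t3)} *)
  dec_t1 : 'rV[G]_l -> 'rV[G]_l -> 'rV[G]_l -> 'rV[G]_k;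
  dec_t2 : 'rV[G]_l -> 'rV[G]_l -> 'rV[G]_k;
  dec_t3 : 'rV[G]_l -> 'rV[G]_l -> 'rV[G]_k
}.

Section Eval.
Context (G : finZmodType) (k l : nat) (C : S3code G k l).
Definition e_u1v1 (X1 X2 X3 : 'rV[G]_k) : 'rV[G]_l :=
  f_u1v1 C (f_s1u1 C X1) (f_s3u1 C X3).
Definition e_u2v2 (X1 X2 X3 : 'rV[G]_k) : 'rV[G]_l :=
  f_u2v2 C (f_s2u2 C X2) (f_s3u2 C X3).
Definition e_u3t1 (X1 X2 X3 : 'rV[G]_k) : 'rV[G]_l :=
  f_u3t1 C (f_s2u3 C X2) (f_s1u3 C X1).
Definition e_v1t1 (X1 X2 X3 : 'rV[G]_k) : 'rV[G]_l := f_v1t1 C (e_u1v1 X1 X2 X3).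
Definition e_v1t3 (X1 X2 X3 : 'rV[G]_k) : 'rV[G]_l := f_v1t3 C (e_u1v1 X1 X2 X3).
Definition e_v2t2 (X1 X2 X3 : 'rV[G]_k) : 'rV[G]_l := f_v2t2 C (e_u2v2 X1 X2 X3).
Definition e_v2t3 (X1 X2 X3 : 'rV[G]_k) : 'rV[G]_l := f_v2t3 C (e_u2v2 X1 X2 X3).

Definition out_t1 (X1 X2 X3 : 'rV[G]_k) : 'rV[G]_k :=
  dec_t1 C (e_v1t1 X1 X2 X3) (f_s1t1 C X1) (e_u3t1 X1 X2 X3).
Definition out_t2 (X1 X2 X3 : 'rV[G]_k) : 'rV[G]_k :=
  dec_t2 C (e_v2t2 X1 X2 X3) (f_s1t2 C X1).
Definition out_t3 (X1 X2 X3 : 'rV[G]_k) : 'rV[G]_k :=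
  dec_t3 C (e_v1t3 X1 X2 X3) (e_v2t3 X1 X2 X3).
End Eval.

Definition is_solution (G : finZmodType) (k l : nat) (C : S3code G k l) : Prop :=
  forall X1 X2 X3 : 'rV[G]_k,
    [/\ out_t1 C X1 X2 X3 = X1 + X2 + X3,
        out_t2 C X1 X2 X3 = X1 + X2 + X3
      & out_t3 C X1 X2 X3 = X1 + X2 + X3].

From mathcomp Require Import all_boot all_order all_algebra.
Set Implicit Arguments. Unset Strict Implicit. Unset Printing Implicit Defensive.
Import GRing.Theory.
Local Open Scope ring_scope.

(* Suppose two message triples (X1,X2,X3) and (Y1,Y2,Y3) put the
   same vectors on the cut edges (u1,v1) and (u2,v2).
   - Terminal t3 only sees these two edges, so both triples have the same sum.
   - Terminal t2 sees (u2,v2), which does not depend on X1, and (s1,t2);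
     hence (X1,X2,X3) and (X1,Y2,Y3) have the same sum.  Comparing with the
     first point gives X1 = Y1.
   - Terminal t1 sees (u1,v1), which does not depend on X2, and the edges
     (s1,t1), (u3,t1), which only depend on X1 and X2; hence (X1,X2,X3) and
     (X1,X2,Y3) have the same sum, so X3 = Y3, and finally X2 = Y2.
   The cardinality bound follows by counting: an injection from
   (G^k)^3 into (G^l)^2 forces |G|^(3k) <= |G|^(2l). *)

Lemma card_triple_le_pair (T : finType) (k l : nat)
    (f : 'rV[T]_k * 'rV[T]_k * 'rV[T]_k -> 'rV[T]_l * 'rV[T]_l) :
  injective f -> (#|T| ^ (3 * k) <= #|T| ^ (2 * l))%N.
Proof.
move=> /leq_card; rewrite !card_prod !card_mx !mul1n -!expnD.
by rewrite !mulSn mul0n !addn0 addnA.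
Qed.

Section CutDecoding.

Variables (G : finZmodType) (k l : nat) (C : S3code G k l).
Hypothesis solC : is_solution C.

Definition cut_vectors (X : 'rV[G]_k * 'rV[G]_k * 'rV[G]_k) :
    'rV[G]_l * 'rV[G]_l :=
  (e_u1v1 C X.1.1 X.1.2 X.2, e_u2v2 C X.1.1 X.1.2 X.2).

Lemma sum_eq_from_t3 (X1 X2 X3 Y1 Y2 Y3 : 'rV[G]_k) :
  e_u1v1 C X1 X2 X3 = e_u1v1 C Y1 Y2 Y3 ->
  e_u2v2 C X1 X2 X3 = e_u2v2 C Y1 Y2 Y3 ->
  X1 + X2 + X3 = Y1 + Y2 + Y3.
Proof.
move=> eq1 eq2; have [_ _ <-] := solC X1 X2 X3; have [_ _ <-] := solC Y1 Y2 Y3.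
by rewrite /out_t3 /e_v1t3 /e_v2t3 eq1 eq2.
Qed.

(* Terminal t2: since (u2,v2) ignores X1, the sum is determined by X1 and
   the vector on (u2,v2). *)
Lemma sum_eq_from_t2 (X1 X2 X3 Y1 Y2 Y3 : 'rV[G]_k) :
  e_u2v2 C X1 X2 X3 = e_u2v2 C Y1 Y2 Y3 ->
  X1 + X2 + X3 = X1 + Y2 + Y3.
Proof.
move=> eq2; have [_ <- _] := solC X1 X2 X3; have [_ <- _] := solC X1 Y2 Y3.
by rewrite /out_t2 /e_v2t2 eq2.
Qed.

(* Terminal t1: since (u1,v1) ignores X2 and the other edges into t1 only
   depend on X1 and X2, the sum is determined by X1, X2 and (u1,v1). *)
Lemma sum_eq_from_t1 (X1 X2 X3 Y3 : 'rV[G]_k) :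
  e_u1v1 C X1 X2 X3 = e_u1v1 C X1 X2 Y3 ->
  X1 + X2 + X3 = X1 + X2 + Y3.
Proof.
move=> eq1; have [<- _ _] := solC X1 X2 X3; have [<- _ _] := solC X1 X2 Y3.
by rewrite /out_t1 /e_v1t1 eq1.
Qed.

Lemma cut_vectors_inj : injective cut_vectors.
Proof.
move=> [[X1 X2] X3] [[Y1 Y2] Y3] [eq1 eq2] /=.
have sum_t3 := sum_eq_from_t3 eq1 eq2.
have sum_t2 := sum_eq_from_t2 eq2.
have eqX1 : X1 = Y1 by move: sum_t3; rewrite sum_t2 -!addrA => /addIr.
subst Y1.
have eqX3 : X3 = Y3 by apply/(addrI (X1 + X2))/sum_eq_from_t1/eq1.
subst Y3.
have eqX2 : X2 = Y2 by move: sum_t2 => /addIr /addrI.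
by subst Y2.
Qed.

End CutDecoding.

Theorem mainTheorem6 (G : finZmodType) (k l : nat) (C : S3code G k l) :
  is_solution C ->
  injective (fun X : 'rV[G]_k * 'rV[G]_k * 'rV[G]_k =>
               (e_u1v1 C (fst (fst X)) (snd (fst X)) (snd X),
                e_u2v2 C (fst (fst X)) (snd (fst X)) (snd X)))
  /\ (#|G| ^ (3 * k) <= #|G| ^ (2 * l))%N.
Proof.
move=> solC; have inj := cut_vectors_inj solC.
by split; [exact: inj | exact: card_triple_le_pair inj].
Qed.
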